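(* Let $\mathcal M_{AI}$ be the category whose objects are countable discrete metric spaces of bounded geometry and whose morphisms are almost isometries. Then $f\mapsto M_{d_f}$ is a functor from $\mathcal M_{AI}$ to $\mathcal M$: for almost isometries $f:X\to Y$, $g:Y\to Z$ between bounded geometry spaces, $M_{d_{g\circ f}}(X,Z)=M_{d_f}(X,Y)\hat\otimes M_{d_g}(Y,Z)=M_{d_g\circ d_f}(X,Z)$, and $M_{d_{\mathrm{id}_X}}(X,X)=C^*_u(X)$.
   Context: Bounded geometry: for every $R>0$ the number of points in balls of radius $R$ is finite and uniformly bounded. An almost isometry $f:X\to Y$ satisfies $d_X(x,x')-C\le d_Y(f(x),f(x'))\le d_X(x,x')+C$ for some $C>0$; $d_f$ is the metric on $X\sqcup Y$ extending $d_X,d_Y$ with $d_f(x,y)=\inf_{\tilde x\in X}(d_X(x,\tilde x)+C/2+d_Y(f(\tilde x),y))$. $\mathcal M$ is the category whose objects are countable discrete metric spaces and whose morphisms $X\to Y$ are the spaces $M_d(X,Y)$, $d$ a metric on $X\sqcup Y$ extending $d_X,d_Y$, where $M_d(X,Y)$ is the norm closure in $\mathbb B(l^2(X),l^2(Y))$ of bounded operators $T$ of finite propagation (i.e. $\langle T\delta_x,\delta_y\rangle=0$ whenever $d(x,y)\ge L$, for some $L$); composition is $(M_{d_1}(X,Y),M_{d_2}(Y,Z))\mapsto M_{d_2\circ d_1}(X,Z)$, with $(d_2\circ d_1)(x,z)=\inf_y(d_1(x,y)+d_2(y,z))$. $M\hat\otimes N$ is the norm closure of the span of compositions $S\circ T$,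 $T\in M$, $S\in N$. $C^*_u(X)$ is the uniform Roe algebra (norm closure of finite-propagation bounded operators on $l^2(X)$). *)

From Stdlib Require Import Reals List Classical ClassicalEpsilon.
Import ListNotations.
Open Scope R_scope.

Record cpx := mkC { re : R; im : R }.
Definition c0 : cpx := mkC 0 0.
Definition c1 : cpx := mkC 1 0.
Definition cadd (a b : cpx) := mkC (re a + re b) (im a + im b).
Definition csub (a b : cpx) := mkC (re a - re b) (im a - im b).
Definition cmul (a b : cpx) :=
  mkC (re a * re b - im a * im b) (re a * im b + im a * re b).
Definition cnorm2 (a : cpx) : R := re a * re a + im a * im a.

Record CDMS := {
  pt :> Type;
  dist : pt -> pt -> R;
  dist_nonneg : forall x y, 0 <= dist x y;
  dist_sym : forall x y, dist x y = dist y x;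
  dist_eq0 : forall x y, dist x y = 0 <-> x = y;
  dist_tri : forall x y z, dist x z <= dist x y + dist y z;
  countable : exists e : pt -> nat, forall x y, e x = e y -> x = y;
  discrete : forall x, exists r, 0 < r /\ forall y, dist x y < r -> y = x
}.

Definition bounded_geometry (X : CDMS) : Prop :=
  forall Rad, exists N : nat, forall (x : X) (l : list X),
    NoDup l -> (forall y, In y l -> dist X x y <= Rad) -> (length l <= N)%nat.

Definition almost_isometry (X Y : CDMS) (f : X -> Y) (C : R) : Prop :=
  0 < C /\ forall x x' : X,
    dist X x x' - C <= dist Y (f x) (f x') /\ dist Y (f x) (f x') <= dist X x x' + C.

Definition is_glb (S : R -> Prop) (m : R) : Prop :=
  (forall r, S r -> m <= r) /\ (forall m', (forall r, S r -> m' <= r) -> m' <= m).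
Definition Rinf (S : R -> Prop) : R := epsilon (inhabits 0) (fun m => is_glb S m).

(** A metric on X ⊔ Y extending d_X and d_Y is determined by its cross
    distances dc : X -> Y -> R; this predicate says the glued function is a
    metric. *)
Definition is_metric_ext (X Y : CDMS) (dc : X -> Y -> R) : Prop :=
  (forall x y, 0 < dc x y) /\
  (forall (x x' : X) (y : Y), dc x y <= dist X x x' + dc x' y) /\
  (forall (x : X) (y y' : Y), dc x y <= dc x y' + dist Y y' y) /\
  (forall (x x' : X) (y : Y), dist X x x' <= dc x y + dc x' y) /\
  (forall (x : X) (y y' : Y), dist Y y y' <= dc x y + dc x y').

Definition d_f (X Y : CDMS) (f : X -> Y) (C : R) (x : X) (y : Y) : R :=
  Rinf (fun r => exists xt : X, r = dist X x xt + C / 2 + dist Y (f xt) y).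

Definition dcomp (X Y Z : CDMS) (d1 : X -> Y -> R) (d2 : Y -> Z -> R)
  (x : X) (z : Z) : R :=
  Rinf (fun r => exists y : Y, r = d1 x y + d2 y z).

Definition sumsq {X : Type} (v : X -> cpx) (l : list X) : R :=
  fold_right (fun x acc => cnorm2 (v x) + acc) 0 l.
Definition normle {X : Type} (v : X -> cpx) (r : R) : Prop :=
  forall l : list X, NoDup l -> sumsq v l <= r * r.
Definition l2 {X : Type} (v : X -> cpx) : Prop := exists r, 0 <= r /\ normle v r.

Definition opbound {X Y : Type} (F : (X -> cpx) -> (Y -> cpx)) (c : R) : Prop :=
  forall v r, 0 <= r -> normle v r -> normle (F v) (c * r).

Record Op (X Y : Type) := {
  app :> (X -> cpx) -> (Y -> cpx);
  op_add : forall u v, l2 u -> l2 v -> forall y,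
     app (fun x => cadd (u x) (v x)) y = cadd (app u y) (app v y);
  op_scal : forall a u, l2 u -> forall y,
     app (fun x => cmul a (u x)) y = cmul a (app u y);
  op_bdd : exists c, 0 <= c /\ opbound app c
}.
Arguments app {X Y}.

Definition delta {X : Type} (x : X) : X -> cpx :=
  fun x' => if excluded_middle_informative (x = x') then c1 else c0.

Definition finite_prop {X Y : Type} (dc : X -> Y -> R) (T : Op X Y) : Prop :=
  exists L, forall x y, L <= dc x y -> app T (delta x) y = c0.

Definition Mspace {X Y : Type} (dc : X -> Y -> R) (T : Op X Y) : Prop :=
  forall eps, 0 < eps -> exists S : Op X Y,
    finite_prop dc S /\ opbound (fun v y => csub (app T v y) (app S v y)) eps.

Definition Cu (X : CDMS) : Op X X -> Prop := Mspace (dist X).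

(** M ⊗^ N : norm closure of the linear span of compositions S ∘ T *)
Definition lincomb {X Y Z : Type} (l : list (cpx * Op X Y * Op Y Z))
  (v : X -> cpx) (z : Z) : cpx :=
  fold_right (fun p acc => cadd (cmul (fst (fst p)) (app (snd p) (app (snd (fst p)) v) z)) acc) c0 l.

Definition tensor {X Y Z : Type} (M : Op X Y -> Prop) (N : Op Y Z -> Prop)
  (Rop : Op X Z) : Prop :=
  forall eps, 0 < eps -> exists l : list (cpx * Op X Y * Op Y Z),
    Forall (fun p => M (snd (fst p)) /\ N (snd p)) l /\
    opbound (fun v z => csub (app Rop v z) (lincomb l v z)) eps.

Definition same_ops {X Y : Type} (M N : Op X Y -> Prop) : Prop :=
  forall T, M T <-> N T.

(* All cross distances in the theorem (d_f, d_{g∘f}, d_g∘d_f, d_id) are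
   "coarsely equal", i.e. equal up to a bounded additive error, to graph
   distances (x,y) |-> d(f x, y), and M_d only depends on the coarse class of
   d (Mspace_coarse_eq); this gives M_{d_{g∘f}} = M_{d_g∘d_f} and
   M_{d_id} = C*_u(X).  The real content is M_{d_f} ⊗^ M_{d_g} = M_{d_g∘d_f}:
   (⊆) products of finite-propagation operators have finite propagation for
   d_g∘d_f because d_f-balls are finite, and M_d is closed and stable under
   approximate products; (⊇) an operator T of finite propagation for the
   coarsely equal (x,z) |-> d_g(f x, z) splits as T = Σ_i (T U_i) V_i, where the
   uniformly finite fibres of f are coloured with finitely many colours and
   V_i, U_i transport the points of colour i along f. *)
From Stdlib Require Import Reals Lra Lia List Classical ClassicalEpsilon FunctionalExtensionality.
Import ListNotations.
Open Scope R_scope.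

Lemma cpx_eq (a b : cpx) : re a = re b -> im a = im b -> a = b.
Proof. destruct a, b; simpl; intros; subst; reflexivity. Qed.

Ltac cpx_ring := apply cpx_eq; unfold cadd, csub, cmul, c0, c1; simpl; ring.

Lemma cnorm2_nonneg a : 0 <= cnorm2 a.
Proof. unfold cnorm2; nra. Qed.

Lemma cnorm2_c0 : cnorm2 c0 = 0.
Proof. unfold cnorm2, c0; simpl; ring. Qed.

Lemma cnorm2_cmul a b : cnorm2 (cmul a b) = cnorm2 a * cnorm2 b.
Proof. unfold cnorm2, cmul; simpl; ring. Qed.

(* Weighted parallelogram inequality |a+b|² <= (1+t)|a|² + (1+1/t)|b|²,
   the pointwise source of the triangle inequality in l². *)
Lemma cnorm2_cadd_le a b t : 0 < t ->
  cnorm2 (cadd a b) <= (1 + t) * cnorm2 a + (1 + / t) * cnorm2 b.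
Proof.
  intros Ht. unfold cnorm2, cadd; simpl.
  set (p := re a); set (q := im a); set (u := re b); set (w := im b).
  assert (Hsq : 0 <= (t * p - u) * (t * p - u) + (t * q - w) * (t * q - w)).
  { pose proof (Rle_0_sqr (t * p - u)); pose proof (Rle_0_sqr (t * q - w)).
    unfold Rsqr in *; lra. }
  assert (E : (1 + t) * (p * p + q * q) + (1 + / t) * (u * u + w * w)
     - ((p + u) * (p + u) + (q + w) * (q + w))
     = / t * ((t * p - u) * (t * p - u) + (t * q - w) * (t * q - w))).
  { field. lra. }
  assert (0 <= / t * ((t * p - u) * (t * p - u) + (t * q - w) * (t * q - w))).
  { apply Rmult_le_pos; [left; apply Rinv_0_lt_compat|]; lra. }
  lra.
Qed.

Definition cabs (a : cpx) : R := sqrt (cnorm2 a).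

Lemma cabs_nonneg a : 0 <= cabs a.
Proof. apply sqrt_pos. Qed.

Definition cm1 : cpx := mkC (-1) 0.

Lemma csub_as_cadd (a b : cpx) : csub a b = cadd a (cmul cm1 b).
Proof. cpx_ring. Qed.

Lemma cabs_cm1 : cabs cm1 = 1.
Proof.
  unfold cabs, cnorm2, cm1; simpl. replace (-1 * -1 + 0 * 0) with 1 by ring. apply sqrt_1.
Qed.

Lemma sumsq_dom {X} (u v : X -> cpx) l :
  (forall x, cnorm2 (u x) <= cnorm2 (v x)) -> sumsq u l <= sumsq v l.
Proof. intros H; induction l; simpl; [lra|]. specialize (H a). lra. Qed.

Lemma sumsq_add {X} (u v : X -> cpx) l t : 0 < t ->
  sumsq (fun x => cadd (u x) (v x)) l <= (1 + t) * sumsq u l + (1 + / t) * sumsq v l.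
Proof.
  intros Ht; induction l; simpl; [lra|].
  pose proof (cnorm2_cadd_le (u a) (v a) t Ht). lra.
Qed.

Lemma sumsq_scal {X} (v : X -> cpx) a l :
  sumsq (fun x => cmul a (v x)) l = cnorm2 a * sumsq v l.
Proof. induction l; simpl; [ring|]. rewrite cnorm2_cmul, IHl; ring. Qed.

Lemma normle_ext {X} (u v : X -> cpx) r : (forall x, u x = v x) -> normle v r -> normle u r.
Proof.
  intros E H. replace u with v; [exact H|]. apply functional_extensionality; auto.
Qed.

Lemma normle_dom {X} (u v : X -> cpx) r :
  (forall x, cnorm2 (u x) <= cnorm2 (v x)) -> normle v r -> normle u r.
Proof. intros E H l Hl. eapply Rle_trans; [apply sumsq_dom; eauto|]. auto. Qed.

Lemma normle_mono {X} (v : X -> cpx) r r' : 0 <= r -> r <= r' -> normle v r -> normle v r'.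
Proof. intros H0 H1 H l Hl. specialize (H l Hl). nra. Qed.

Lemma normle_zero {X} r : 0 <= r -> normle (fun _ : X => c0) r.
Proof. intros Hr l _. induction l; simpl; [nra|]. rewrite cnorm2_c0. lra. Qed.

Lemma le_of_slack S c : 0 <= c -> (forall d, 0 < d -> S <= (c + d) * (c + d)) -> S <= c * c.
Proof.
  intros Hc H. destruct (Rle_dec S (c * c)) as [h|h]; [exact h|].
  exfalso. apply Rnot_le_lt in h.
  set (d := Rmin 1 ((S - c * c) / (2 * (2 * c + 1)))).
  assert (Hd : 0 < d). { unfold d. apply Rmin_glb_lt; [lra|]. apply Rdiv_lt_0_compat; lra. }
  assert (Hd1 : d <= 1) by apply Rmin_l.
  assert (Hd2 : d * (2 * (2 * c + 1)) <= S - c * c).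
  { assert (d <= (S - c * c) / (2 * (2 * c + 1))) by apply Rmin_r.
    apply (Rmult_le_compat_r (2 * (2 * c + 1))) in H0; [|lra].
    unfold Rdiv in H0. rewrite Rmult_assoc, Rinv_l in H0 by lra. lra. }
  specialize (H d Hd). nra.
Qed.

Lemma normle_add {X} (u v : X -> cpx) a b : 0 <= a -> 0 <= b -> normle u a -> normle v b ->
  normle (fun x => cadd (u x) (v x)) (a + b).
Proof.
  intros Ha Hb Hu Hv l Hl. apply le_of_slack; [lra|]. intros d Hd.
  set (a' := a + d / 2). set (b' := b + d / 2).
  assert (0 < a') by (unfold a'; lra). assert (0 < b') by (unfold b'; lra).
  assert (Ht : 0 < b' / a') by (apply Rdiv_lt_0_compat; lra).
  assert (0 < / (b' / a')) by (apply Rinv_0_lt_compat; lra).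
  eapply Rle_trans; [apply (sumsq_add u v l (b' / a') Ht)|].
  pose proof (Hu l Hl); pose proof (Hv l Hl).
  assert (sumsq u l <= a' * a') by (unfold a'; nra).
  assert (sumsq v l <= b' * b') by (unfold b'; nra).
  assert (E : (1 + b' / a') * (a' * a') + (1 + / (b' / a')) * (b' * b') = (a' + b') * (a' + b'))
    by (field; lra).
  replace (a + b + d) with (a' + b') by (unfold a', b'; lra).
  rewrite <- E. apply Rplus_le_compat; apply Rmult_le_compat_l; lra.
Qed.

Lemma normle_scal {X} (v : X -> cpx) a r : 0 <= r -> normle v r ->
  normle (fun x => cmul a (v x)) (cabs a * r).
Proof.
  intros Hr H l Hl. rewrite sumsq_scal. specialize (H l Hl).
  unfold cabs. pose proof (cnorm2_nonneg a).
  replace (sqrt (cnorm2 a) * r * (sqrt (cnorm2 a) * r)) with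
    ((sqrt (cnorm2 a) * sqrt (cnorm2 a)) * (r * r)) by ring.
  rewrite sqrt_sqrt by lra. apply Rmult_le_compat_l; lra.
Qed.

Lemma l2_add {X} (u v : X -> cpx) : l2 u -> l2 v -> l2 (fun x => cadd (u x) (v x)).
Proof. intros [a [Ha Hu]] [b [Hb Hv]]. exists (a + b). split; [lra|]. apply normle_add; auto. Qed.

Lemma l2_scal {X} (u : X -> cpx) a : l2 u -> l2 (fun x => cmul a (u x)).
Proof.
  intros [r [Hr H]]. exists (cabs a * r). split.
  - apply Rmult_le_pos; auto. apply cabs_nonneg.
  - apply normle_scal; auto.
Qed.

Lemma l2_zero {X} : l2 (fun _ : X => c0).
Proof. exists 0. split; [lra|]. apply normle_zero; lra. Qed.

Lemma l2_dom {X} (u v : X -> cpx) : (forall x, cnorm2 (u x) <= cnorm2 (v x)) -> l2 v -> l2 u.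
Proof. intros E [r [Hr H]]. exists r. split; auto. eapply normle_dom; eauto. Qed.

Lemma opbound_ext {X Y} (F G : (X -> cpx) -> Y -> cpx) c :
  (forall v r, 0 <= r -> normle v r -> forall y, F v y = G v y) -> opbound G c -> opbound F c.
Proof. intros E H v r Hr Hv. eapply normle_ext; [|apply (H v r Hr Hv)]. intros; eauto. Qed.

Lemma opbound_mono {X Y} (F : (X -> cpx) -> Y -> cpx) c c' : 0 <= c -> c <= c' ->
  opbound F c -> opbound F c'.
Proof. intros H0 H1 H v r Hr Hv. eapply normle_mono; [| |apply (H v r Hr Hv)]; nra. Qed.

Lemma opbound_add {X Y} (F G : (X -> cpx) -> Y -> cpx) a b : 0 <= a -> 0 <= b ->
  opbound F a -> opbound G b -> opbound (fun v y => cadd (F v y) (G v y)) (a + b).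
Proof.
  intros Ha Hb HF HG v r Hr Hv. rewrite Rmult_plus_distr_r. apply normle_add; nra || auto.
Qed.

Lemma opbound_scal {X Y} (F : (X -> cpx) -> Y -> cpx) a c : 0 <= c ->
  opbound F c -> opbound (fun v y => cmul a (F v y)) (cabs a * c).
Proof. intros Hc HF v r Hr Hv. rewrite Rmult_assoc. apply normle_scal; [nra|auto]. Qed.

Lemma opbound_sub {X Y} (F G : (X -> cpx) -> Y -> cpx) a b : 0 <= a -> 0 <= b ->
  opbound F a -> opbound G b -> opbound (fun v y => csub (F v y) (G v y)) (a + b).
Proof.
  intros Ha Hb HF HG. eapply opbound_ext; [intros; apply csub_as_cadd|].
  pose proof (opbound_scal G cm1 b Hb HG) as H. rewrite cabs_cm1, Rmult_1_l in H.
  apply opbound_add; auto.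
Qed.

Lemma opbound_comp {X Y Z} (F : (X -> cpx) -> Y -> cpx) (G : (Y -> cpx) -> Z -> cpx) a b :
  0 <= a -> 0 <= b -> opbound F a -> opbound G b -> opbound (fun v => G (F v)) (b * a).
Proof. intros Ha Hb HF HG v r Hr Hv. rewrite Rmult_assoc. apply HG; [nra|]. apply HF; auto. Qed.

Lemma opbound_zero {X Y} c : 0 <= c -> opbound (fun (v : X -> cpx) (y : Y) => c0) c.
Proof. intros Hc v r Hr Hv. apply normle_zero. nra. Qed.

Lemma op_l2 {X Y} (T : Op X Y) u : l2 u -> l2 (app T u).
Proof.
  intros [r [Hr Hu]]. destruct (op_bdd _ _ T) as [c [Hc HT]].
  exists (c * r). split; [nra|]. apply HT; auto.
Qed.

Lemma op_ext {X Y} (T : Op X Y) u v : (forall x, u x = v x) -> app T u = app T v.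
Proof. intros E. f_equal. apply functional_extensionality; auto. Qed.

Lemma op_zero {X Y} (T : Op X Y) y : app T (fun _ => c0) y = c0.
Proof.
  rewrite (op_ext T (fun _ => c0) (fun _ => cmul c0 c0)) by (intros; cpx_ring).
  rewrite (op_scal _ _ T c0 (fun _ => c0) l2_zero y). cpx_ring.
Qed.

Lemma op_sub {X Y} (T : Op X Y) u v : l2 u -> l2 v -> forall y,
  app T (fun x => csub (u x) (v x)) y = csub (app T u y) (app T v y).
Proof.
  intros Hu Hv y.
  rewrite (op_ext T _ (fun x => cadd (u x) (cmul cm1 (v x)))) by (intros; apply csub_as_cadd).
  rewrite op_add, op_scal by auto using l2_scal. symmetry; apply csub_as_cadd.
Qed.

Definition lsum {I X : Type} (l : list I) (h : I -> X -> cpx) : X -> cpx :=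
  fun x => fold_right (fun i acc => cadd (h i x) acc) c0 l.

Lemma l2_lsum {I X} (l : list I) (h : I -> X -> cpx) :
  (forall i, In i l -> l2 (h i)) -> l2 (lsum l h).
Proof.
  induction l as [|i l IH]; intros H; [apply l2_zero|].
  apply (l2_add (h i) (lsum l h)); auto with datatypes.
Qed.

Lemma op_lsum {I X Y} (T : Op X Y) (l : list I) (h : I -> X -> cpx) :
  (forall i, In i l -> l2 (h i)) -> forall y,
  app T (lsum l h) y = fold_right (fun i acc => cadd (app T (h i) y) acc) c0 l.
Proof.
  induction l as [|i l IH]; intros H y; [apply op_zero|].
  change (lsum (i :: l) h) with (fun x => cadd (h i x) (lsum l h x)).
  rewrite op_add by (auto with datatypes || (apply l2_lsum; auto with datatypes)).
  simpl. rewrite IH; auto with datatypes.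
Qed.

Section OpConstructions.
Context {X Y Z : Type}.

Lemma comp_add (S : Op Y Z) (T : Op X Y) : forall u v, l2 u -> l2 v -> forall z,
  app S (app T (fun x => cadd (u x) (v x))) z = cadd (app S (app T u) z) (app S (app T v) z).
Proof.
  intros u v Hu Hv z.
  rewrite (op_ext S _ (fun y => cadd (app T u y) (app T v y))) by (intros; apply op_add; auto).
  apply op_add; apply op_l2; auto.
Qed.

Lemma comp_scal (S : Op Y Z) (T : Op X Y) : forall a u, l2 u -> forall z,
  app S (app T (fun x => cmul a (u x))) z = cmul a (app S (app T u) z).
Proof.
  intros a u Hu z.
  rewrite (op_ext S _ (fun y => cmul a (app T u y))) by (intros; apply op_scal; auto).
  apply op_scal; apply op_l2; auto.
Qed.

Lemma comp_bdd (S : Op Y Z) (T : Op X Y) :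
  exists c, 0 <= c /\ opbound (fun v => app S (app T v)) c.
Proof.
  destruct (op_bdd _ _ S) as [a [Ha HS]]. destruct (op_bdd _ _ T) as [b [Hb HT]].
  exists (a * b). split; [nra|]. apply (opbound_comp (app T) (app S)); auto.
Qed.

Definition compOp (S : Op Y Z) (T : Op X Y) : Op X Z :=
  {| app := fun v => app S (app T v); op_add := comp_add S T; op_scal := comp_scal S T;
     op_bdd := comp_bdd S T |}.

Lemma add_add (S T : Op X Y) : forall u v, l2 u -> l2 v -> forall y,
  cadd (app S (fun x => cadd (u x) (v x)) y) (app T (fun x => cadd (u x) (v x)) y) =
  cadd (cadd (app S u y) (app T u y)) (cadd (app S v y) (app T v y)).
Proof. intros. rewrite !op_add by auto. cpx_ring. Qed.

Lemma add_scal (S T : Op X Y) : forall a u, l2 u -> forall y,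
  cadd (app S (fun x => cmul a (u x)) y) (app T (fun x => cmul a (u x)) y) =
  cmul a (cadd (app S u y) (app T u y)).
Proof. intros. rewrite !op_scal by auto. cpx_ring. Qed.

Lemma add_bdd (S T : Op X Y) :
  exists c, 0 <= c /\ opbound (fun v y => cadd (app S v y) (app T v y)) c.
Proof.
  destruct (op_bdd _ _ S) as [a [Ha HS]]. destruct (op_bdd _ _ T) as [b [Hb HT]].
  exists (a + b). split; [lra|]. apply opbound_add; auto.
Qed.

Definition addOp (S T : Op X Y) : Op X Y :=
  {| app := fun v y => cadd (app S v y) (app T v y); op_add := add_add S T;
     op_scal := add_scal S T; op_bdd := add_bdd S T |}.

Lemma scal_add (a : cpx) (S : Op X Y) : forall u v, l2 u -> l2 v -> forall y,
  cmul a (app S (fun x => cadd (u x) (v x)) y) =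
  cadd (cmul a (app S u y)) (cmul a (app S v y)).
Proof. intros. rewrite !op_add by auto. cpx_ring. Qed.

Lemma scal_scal (a : cpx) (S : Op X Y) : forall b u, l2 u -> forall y,
  cmul a (app S (fun x => cmul b (u x)) y) = cmul b (cmul a (app S u y)).
Proof. intros. rewrite !op_scal by auto. cpx_ring. Qed.

Lemma scal_bdd (a : cpx) (S : Op X Y) :
  exists c, 0 <= c /\ opbound (fun v y => cmul a (app S v y)) c.
Proof.
  destruct (op_bdd _ _ S) as [c [Hc HS]].
  exists (cabs a * c). split; [apply Rmult_le_pos; auto; apply cabs_nonneg|].
  apply opbound_scal; auto.
Qed.

Definition scalOp (a : cpx) (S : Op X Y) : Op X Y :=
  {| app := fun v y => cmul a (app S v y); op_add := scal_add a S;
     op_scal := scal_scal a S; op_bdd := scal_bdd a S |}.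

Lemma zero_add : forall u v : X -> cpx, l2 u -> l2 v -> forall y : Y, c0 = cadd c0 c0.
Proof. intros. cpx_ring. Qed.

Lemma zero_scal : forall a (u : X -> cpx), l2 u -> forall y : Y, c0 = cmul a c0.
Proof. intros. cpx_ring. Qed.

Lemma zero_bdd : exists c, 0 <= c /\ opbound (fun (v : X -> cpx) (y : Y) => c0) c.
Proof. exists 0. split; [lra|]. apply opbound_zero; lra. Qed.

Definition zeroOp : Op X Y :=
  {| app := fun v y => c0; op_add := zero_add; op_scal := zero_scal; op_bdd := zero_bdd |}.

End OpConstructions.

Lemma opbound_comp_diff {X Y Z} (S S' : Op Y Z) (T T' : Op X Y) cS cT dl :
  0 <= cS -> 0 <= cT -> 0 <= dl -> opbound S cS -> opbound T cT ->
  opbound (fun v y => csub (app T v y) (app T' v y)) dl ->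
  opbound (fun w z => csub (app S w z) (app S' w z)) dl ->
  opbound (fun v z => csub (app S (app T v) z) (app S' (app T' v) z))
          (cS * dl + dl * (cT + dl)).
Proof.
  intros HcS HcT Hdl BS BT DT DS.
  assert (BT' : opbound (app T') (cT + dl)).
  { eapply opbound_ext; [|apply (opbound_sub _ _ cT dl HcT Hdl BT DT)].
    intros; simpl; cpx_ring. }
  pose proof (opbound_comp _ (app S) dl cS Hdl HcS DT BS) as B1.
  pose proof (opbound_comp (app T') _ (cT + dl) dl ltac:(lra) Hdl BT' DS) as B2.
  assert (HB1 : 0 <= cS * dl) by nra. assert (HB2 : 0 <= dl * (cT + dl)) by nra.
  eapply opbound_ext; [|apply (opbound_add _ _ _ _ HB1 HB2 B1 B2)].
  intros v r Hr Hv z. simpl.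
  rewrite op_sub by (apply op_l2; exists r; auto). cpx_ring.
Qed.

Section Mspaces.
Context {X Y : Type}.

Lemma Mspace_of_fp (dc : X -> Y -> R) (T : Op X Y) : finite_prop dc T -> Mspace dc T.
Proof.
  intros H eps He. exists T. split; auto.
  eapply opbound_ext; [|apply (opbound_zero eps); lra]. intros; simpl; cpx_ring.
Qed.

Lemma Mspace_closed (dc : X -> Y -> R) (T : Op X Y) :
  (forall eps, 0 < eps -> exists S, Mspace dc S /\
     opbound (fun v y => csub (app T v y) (app S v y)) eps) -> Mspace dc T.
Proof.
  intros H eps He. destruct (H (eps/2)) as [S [HS HB]]; [lra|].
  destruct (HS (eps/2)) as [S' [HS' HB']]; [lra|].
  exists S'. split; auto.
  replace eps with (eps/2 + eps/2) by field.
  eapply opbound_ext; [|apply (opbound_add _ _ (eps/2) (eps/2) ltac:(lra) ltac:(lra) HB HB')].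
  intros; simpl; cpx_ring.
Qed.

Lemma fp_add (dc : X -> Y -> R) (S T : Op X Y) :
  finite_prop dc S -> finite_prop dc T -> finite_prop dc (addOp S T).
Proof.
  intros [L1 H1] [L2 H2]. exists (Rmax L1 L2). intros x y Hl. simpl.
  pose proof (Rmax_l L1 L2); pose proof (Rmax_r L1 L2).
  rewrite H1, H2 by lra. cpx_ring.
Qed.

Lemma fp_scal (dc : X -> Y -> R) a (S : Op X Y) :
  finite_prop dc S -> finite_prop dc (scalOp a S).
Proof. intros [L H]. exists L. intros x y Hl. simpl. rewrite H by auto. cpx_ring. Qed.

Lemma Mspace_add (dc : X -> Y -> R) (S T : Op X Y) :
  Mspace dc S -> Mspace dc T -> Mspace dc (addOp S T).
Proof.
  intros HS HT eps He. destruct (HS (eps/2)) as [S' [F1 B1]]; [lra|].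
  destruct (HT (eps/2)) as [T' [F2 B2]]; [lra|].
  exists (addOp S' T'). split; [apply fp_add; auto|].
  replace eps with (eps/2 + eps/2) by field.
  eapply opbound_ext; [|apply (opbound_add _ _ (eps/2) (eps/2) ltac:(lra) ltac:(lra) B1 B2)].
  intros; simpl; cpx_ring.
Qed.

Lemma Mspace_scal (dc : X -> Y -> R) a (S : Op X Y) :
  Mspace dc S -> Mspace dc (scalOp a S).
Proof.
  intros HS eps He. pose proof (cabs_nonneg a) as Ha.
  set (dl := eps / (cabs a + 1)).
  assert (Hdl : 0 < dl) by (apply Rdiv_lt_0_compat; lra).
  assert (Hle : cabs a * dl <= eps).
  { unfold dl. replace (cabs a * (eps / (cabs a + 1))) with (eps * (cabs a / (cabs a + 1)))
      by (field; lra).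
    assert (cabs a / (cabs a + 1) <= 1).
    { apply (Rmult_le_reg_r (cabs a + 1)); [lra|].
      unfold Rdiv; rewrite Rmult_assoc, Rinv_l by lra. lra. }
    nra. }
  destruct (HS dl Hdl) as [S' [F1 B1]].
  exists (scalOp a S'). split; [apply fp_scal; auto|].
  apply (opbound_mono _ (cabs a * dl)); [nra|exact Hle|].
  eapply opbound_ext; [|apply (opbound_scal _ a dl ltac:(lra) B1)].
  intros; simpl; cpx_ring.
Qed.

Lemma Mspace_zero (dc : X -> Y -> R) : Mspace dc (@zeroOp X Y).
Proof. apply Mspace_of_fp. exists 0. reflexivity. Qed.

Lemma Mspace_mono (d1 d2 : X -> Y -> R) (K : R) (T : Op X Y) :
  (forall x y, d2 x y <= d1 x y + K) -> Mspace d1 T -> Mspace d2 T.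
Proof.
  intros Hd HT eps He. destruct (HT eps He) as [S [[L HL] B]]. exists S. split; auto.
  exists (L + K). intros x y Hxy. apply HL. specialize (Hd x y). lra.
Qed.

End Mspaces.

Lemma Mspace_comp {X Y Z : Type} (df : X -> Y -> R) (dg : Y -> Z -> R) (d3 : X -> Z -> R)
  (S : Op Y Z) (T : Op X Y) :
  (forall S' T', finite_prop dg S' -> finite_prop df T' -> finite_prop d3 (compOp S' T')) ->
  Mspace dg S -> Mspace df T -> Mspace d3 (compOp S T).
Proof.
  intros Hfp HS HT eps He.
  destruct (op_bdd _ _ S) as [cS [HcS BS]]. destruct (op_bdd _ _ T) as [cT [HcT BT]].
  set (dl := Rmin 1 (eps / (cS + cT + 1))).
  assert (Hdl : 0 < dl) by (apply Rmin_glb_lt; [lra|apply Rdiv_lt_0_compat; lra]).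
  assert (Hdl1 : dl <= 1) by apply Rmin_l.
  assert (Hdl2 : dl * (cS + cT + 1) <= eps).
  { assert (H : dl <= eps / (cS + cT + 1)) by apply Rmin_r.
    apply (Rmult_le_compat_r (cS + cT + 1)) in H; [|lra]. unfold Rdiv in H.
    rewrite Rmult_assoc, Rinv_l in H by lra. lra. }
  destruct (HS dl Hdl) as [S' [FS DS]]. destruct (HT dl Hdl) as [T' [FT DT]].
  exists (compOp S' T'). split; [apply Hfp; auto|].
  apply (opbound_mono _ (cS * dl + dl * (cT + dl))); [nra|nra|].
  exact (opbound_comp_diff S S' T T' cS cT dl HcS HcT ltac:(lra) BS BT DT DS).
Qed.

Lemma glb_exists (S : R -> Prop) : (exists r, S r) -> (exists m, forall r, S r -> m <= r) ->
  exists m, is_glb S m.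
Proof.
  intros [r0 H0] [m Hm].
  destruct (completeness (fun x => S (- x))) as [M [HM1 HM2]].
  - exists (- m). intros x Hx. specialize (Hm _ Hx). lra.
  - exists (- r0). rewrite Ropp_involutive. auto.
  - exists (- M). split.
    + intros r Hr. assert (Hr' : S (- - r)) by (rewrite Ropp_involutive; auto).
      specialize (HM1 (- r) Hr'). lra.
    + intros m' Hm'. assert (M <= - m'); [|lra].
      apply HM2. intros x Hx. specialize (Hm' _ Hx). lra.
Qed.

Definition inf_family {I : Type} (h : I -> R) : R := Rinf (fun r => exists i, r = h i).

Section InfFamily.
Context {I : Type} (h : I -> R) (m : R) (i0 : I).
Hypothesis h_lower : forall i, m <= h i.

Lemma inf_family_glb : is_glb (fun r => exists i, r = h i) (inf_family h).
Proof.
  unfold inf_family, Rinf. apply epsilon_spec, glb_exists.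
  - exists (h i0), i0. reflexivity.
  - exists m. intros r [i ->]. apply h_lower.
Qed.

Lemma inf_family_le i : inf_family h <= h i.
Proof. apply inf_family_glb. exists i. reflexivity. Qed.

Lemma le_inf_family a : (forall i, a <= h i) -> a <= inf_family h.
Proof. intros H. apply inf_family_glb. intros r [i ->]. apply H. Qed.

End InfFamily.

Lemma dist_refl (X : CDMS) (x : X) : dist X x x = 0.
Proof. apply dist_eq0. reflexivity. Qed.

Section DistF.
Variables (X Y : CDMS) (f : X -> Y) (C : R).
Hypothesis C_pos : 0 < C.

Lemma d_f_lower x y xt : 0 <= dist X x xt + C / 2 + dist Y (f xt) y.
Proof. pose proof (dist_nonneg X x xt). pose proof (dist_nonneg Y (f xt) y). lra. Qed.

Lemma d_f_le x xt y : d_f X Y f C x y <= dist X x xt + C / 2 + dist Y (f xt) y.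
Proof.
  exact (inf_family_le (fun xt => dist X x xt + C / 2 + dist Y (f xt) y) 0 x
           (d_f_lower x y) xt).
Qed.

Lemma d_f_ge x y a :
  (forall xt, a <= dist X x xt + C / 2 + dist Y (f xt) y) -> a <= d_f X Y f C x y.
Proof. exact (le_inf_family _ 0 x (d_f_lower x y) a). Qed.

Section AlmostIsometry.
Hypothesis f_ai : forall x x', dist X x x' - C <= dist Y (f x) (f x') /\
                               dist Y (f x) (f x') <= dist X x x' + C.

Lemma d_f_graph x y :
  dist Y (f x) y - C / 2 <= d_f X Y f C x y <= dist Y (f x) y + C / 2.
Proof.
  split.
  - apply d_f_ge. intros xt. destruct (f_ai x xt) as [_ H].
    pose proof (dist_tri Y (f x) (f xt) y). lra.
  - pose proof (d_f_le x x y). rewrite dist_refl in *. lra.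
Qed.

Lemma d_f_tri_X x x' y : dist X x x' <= d_f X Y f C x y + d_f X Y f C x' y.
Proof.
  assert (dist X x x' - d_f X Y f C x' y <= d_f X Y f C x y); [|lra].
  apply d_f_ge. intros xt.
  assert (dist X x x' - (dist X x xt + C / 2 + dist Y (f xt) y) <= d_f X Y f C x' y); [|lra].
  apply d_f_ge. intros xt'. destruct (f_ai xt xt') as [H _].
  pose proof (dist_tri X x xt x'). pose proof (dist_tri X xt xt' x').
  pose proof (dist_tri Y (f xt) y (f xt')).
  rewrite (dist_sym X xt' x'), (dist_sym Y y (f xt')) in *. lra.
Qed.

Lemma d_f_tri_Y x y y' : dist Y y y' <= d_f X Y f C x y + d_f X Y f C x y'.
Proof.
  assert (dist Y y y' - d_f X Y f C x y' <= d_f X Y f C x y); [|lra].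
  apply d_f_ge. intros xt.
  assert (dist Y y y' - (dist X x xt + C / 2 + dist Y (f xt) y) <= d_f X Y f C x y'); [|lra].
  apply d_f_ge. intros xt'. destruct (f_ai xt xt') as [_ H].
  pose proof (dist_tri Y y (f xt) y'). pose proof (dist_tri Y (f xt) (f xt') y').
  pose proof (dist_tri X xt x xt').
  rewrite (dist_sym Y y (f xt)), (dist_sym X xt x) in *. lra.
Qed.

End AlmostIsometry.

Lemma d_f_metric : almost_isometry X Y f C -> is_metric_ext X Y (d_f X Y f C).
Proof.
  intros [_ HA]. split; [|split; [|split; [|split]]].
  - intros x y. apply Rlt_le_trans with (C / 2); [lra|]. apply d_f_ge.
    intros xt. pose proof (dist_nonneg X x xt). pose proof (dist_nonneg Y (f xt) y). lra.
  - intros x x' y.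
    assert (d_f X Y f C x y - dist X x x' <= d_f X Y f C x' y); [|lra].
    apply d_f_ge. intros xt. pose proof (d_f_le x xt y). pose proof (dist_tri X x x' xt). lra.
  - intros x y y'.
    assert (d_f X Y f C x y - dist Y y' y <= d_f X Y f C x y'); [|lra].
    apply d_f_ge. intros xt. pose proof (d_f_le x xt y).
    pose proof (dist_tri Y (f xt) y' y). lra.
  - exact (d_f_tri_X HA).
  - exact (d_f_tri_Y HA).
Qed.

End DistF.

(** * Coarse equality of cross distances *)

Definition coarse_eq {A B : Type} (d1 d2 : A -> B -> R) : Prop :=
  exists K, forall a b, d1 a b <= d2 a b + K /\ d2 a b <= d1 a b + K.

Definition graph_dist (X Y : CDMS) (f : X -> Y) (x : X) (y : Y) : R := dist Y (f x) y.

Section Coarse.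
Context {A B : Type}.

Lemma coarse_eq_sym (d1 d2 : A -> B -> R) : coarse_eq d1 d2 -> coarse_eq d2 d1.
Proof. intros [K H]. exists K. intros a b. specialize (H a b). lra. Qed.

Lemma coarse_eq_trans (d1 d2 d3 : A -> B -> R) :
  coarse_eq d1 d2 -> coarse_eq d2 d3 -> coarse_eq d1 d3.
Proof.
  intros [K1 H1] [K2 H2]. exists (K1 + K2). intros a b.
  specialize (H1 a b); specialize (H2 a b). lra.
Qed.

Lemma coarse_eq_pullback {A' : Type} (h : A' -> A) (d1 d2 : A -> B -> R) :
  coarse_eq d1 d2 -> coarse_eq (fun a b => d1 (h a) b) (fun a b => d2 (h a) b).
Proof. intros [K H]. exists K. intros a b. apply H. Qed.

Lemma Mspace_coarse_eq (d1 d2 : A -> B -> R) :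
  coarse_eq d1 d2 -> same_ops (Mspace d1) (Mspace d2).
Proof.
  intros [K H] T. split; apply (Mspace_mono _ _ K); intros a b; apply H.
Qed.

End Coarse.

Lemma d_f_coarse (X Y : CDMS) (f : X -> Y) (C : R) :
  almost_isometry X Y f C -> coarse_eq (d_f X Y f C) (graph_dist X Y f).
Proof.
  intros [HC HA]. exists (C / 2). intros x y.
  pose proof (d_f_graph X Y f C HC HA x y). unfold graph_dist. lra.
Qed.

Lemma dcomp_coarse (X Y Z : CDMS) (d1 : X -> Y -> R) (d2 : Y -> Z -> R)
  (f : X -> Y) (g : Y -> Z) (Cg : R) :
  (forall x y, 0 <= d1 x y) -> (forall y z, 0 <= d2 y z) ->
  (forall y y', dist Z (g y) (g y') <= dist Y y y' + Cg) ->
  coarse_eq d1 (graph_dist X Y f) -> coarse_eq d2 (graph_dist Y Z g) ->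
  coarse_eq (dcomp X Y Z d1 d2) (graph_dist X Z (fun x => g (f x))).
Proof.
  intros H1 H2 Hg [K1 E1] [K2 E2]. exists (K1 + K2 + Cg). intros x z.
  assert (Hlow : forall y, 0 <= d1 x y + d2 y z).
  { intros y. specialize (H1 x y). specialize (H2 y z). lra. }
  unfold graph_dist in *. split.
  - pose proof (inf_family_le (fun y => d1 x y + d2 y z) 0 (f x) Hlow (f x)) as H.
    destruct (E1 x (f x)) as [Ha _]. destruct (E2 (f x) z) as [Hb _].
    pose proof (Hg (f x) (f x)) as Hc. rewrite dist_refl in Ha. rewrite !dist_refl in Hc.
    cbv beta in H. change (dcomp X Y Z d1 d2 x z) with (inf_family (fun y => d1 x y + d2 y z)).
    lra.
  - assert (dist Z (g (f x)) z - (K1 + K2 + Cg) <= dcomp X Y Z d1 d2 x z); [|lra].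
    apply (le_inf_family (fun y => d1 x y + d2 y z) 0 (f x) Hlow). intros y.
    destruct (E1 x y) as [_ Ha]. destruct (E2 y z) as [_ Hb].
    pose proof (Hg (f x) y). pose proof (dist_tri Z (g (f x)) (g y) z). lra.
Qed.

Lemma ball_list (Y : CDMS) : bounded_geometry Y -> forall (y0 : Y) Rad,
  exists l : list Y, NoDup l /\ forall y, dist Y y0 y <= Rad -> In y l.
Proof.
  intros BG y0 Rad. destruct (BG Rad) as [N HN].
  apply NNPP. intros Hn.
  assert (Hext : forall l : list Y, NoDup l -> exists y, dist Y y0 y <= Rad /\ ~ In y l).
  { intros l Hl. apply NNPP. intros H. apply Hn. exists l. split; auto.
    intros y Hy. apply NNPP. intros Hy'. apply H. exists y; auto. }
  assert (Hlen : forall n, exists l : list Y,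
             NoDup l /\ (forall y, In y l -> dist Y y0 y <= Rad) /\ length l = n).
  { induction n as [|n [l [Hl [Hb Hle]]]].
    - exists nil. repeat split; auto. constructor. intros y [].
    - destruct (Hext l Hl) as [y [Hy Hny]].
      exists (y :: l). repeat split.
      + constructor; auto.
      + intros y' [<-|H]; auto.
      + simpl; lia. }
  destruct (Hlen (S N)) as [l [Hl [Hb Hle]]].
  specialize (HN y0 l Hl Hb). lia.
Qed.

Lemma coarse_balls_finite (X Y : CDMS) (f : X -> Y) (d : X -> Y -> R) :
  bounded_geometry Y -> coarse_eq d (graph_dist X Y f) ->
  forall x L, exists l : list Y, NoDup l /\ forall y, d x y < L -> In y l.
Proof.
  intros BG [K HK] x L. destruct (ball_list Y BG (f x) (L + K)) as [l [Hl Hin]].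
  exists l. split; auto. intros y Hy. apply Hin.
  destruct (HK x y) as [_ H]. unfold graph_dist in H. lra.
Qed.

Lemma delta_ne {X : Type} (x x' : X) : x <> x' -> delta x x' = c0.
Proof. intros H. unfold delta. destruct (excluded_middle_informative (x = x')); congruence. Qed.

Lemma delta_eq {X : Type} (x : X) : delta x x = c1.
Proof. unfold delta. destruct (excluded_middle_informative (x = x)); congruence. Qed.

Lemma delta_l2 {X : Type} (x : X) : l2 (delta x).
Proof.
  exists 1. split; [lra|]. intros l Hl.
  assert (H : sumsq (delta x) l <= 1 /\ (~ In x l -> sumsq (delta x) l = 0)).
  { induction Hl as [|a l Ha Hl [IH1 IH2]]; simpl; [split; [lra|auto]|].
    destruct (classic (x = a)) as [<-|ne].
    - rewrite delta_eq, IH2 by auto. unfold cnorm2, c1; simpl.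
      split; [lra|]. intros H; exfalso; apply H; auto.
    - rewrite delta_ne, cnorm2_c0 by auto. split; [lra|].
      intros H. rewrite IH2; [ring|]. intros H'; apply H; auto. }
  destruct H; lra.
Qed.

Lemma lsum_delta {Y : Type} (u : Y -> cpx) (l : list Y) : NoDup l -> forall y',
  lsum l (fun y y'' => cmul (u y) (delta y y'')) y' = if excluded_middle_informative (In y' l)
                                                      then u y' else c0.
Proof.
  intros Hl y'. induction Hl as [|a l Ha Hl IH].
  { destruct (excluded_middle_informative (In y' [])) as [[]|]; reflexivity. }
  unfold lsum in *; simpl. rewrite IH.
  destruct (classic (a = y')) as [<-|ne].
  - rewrite delta_eq. destruct (excluded_middle_informative (In a l)); [contradiction|].
    destruct (excluded_middle_informative (a = a \/ In a l)); [cpx_ring|tauto].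
  - rewrite delta_ne by auto.
    destruct (excluded_middle_informative (In y' l));
    destruct (excluded_middle_informative (a = y' \/ In y' l)); try cpx_ring; tauto.
Qed.

Lemma op_finsupp {Y Z : Type} (S : Op Y Z) (u : Y -> cpx) (l : list Y) :
  NoDup l -> (forall y, ~ In y l -> u y = c0) -> forall z,
  app S u z = fold_right (fun y acc => cadd (cmul (u y) (app S (delta y) z)) acc) c0 l.
Proof.
  intros Hl Hu z.
  rewrite (op_ext S u (lsum l (fun y y'' => cmul (u y) (delta y y'')))).
  2: { intros y'. rewrite lsum_delta by auto.
       destruct (excluded_middle_informative (In y' l)); auto. }
  rewrite op_lsum by (intros; apply l2_scal, delta_l2).
  clear Hu Hl. induction l; simpl; [reflexivity|].
  rewrite IHl, op_scal by apply delta_l2. reflexivity.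
Qed.

Lemma fold_cadd_zero {Y : Type} (l : list Y) (t : Y -> cpx) :
  (forall y, In y l -> t y = c0) -> fold_right (fun y acc => cadd (t y) acc) c0 l = c0.
Proof. induction l; simpl; intros H; [reflexivity|]. rewrite H, IHl by auto. cpx_ring. Qed.

(** * Inclusion of M_{d1} ⊗^ M_{d2} in M_{d2 ∘ d1} *)

(* If d1-balls are finite and d3 <= d1 + d2, a product of operators of finite
   propagation (for d2 and d1) has finite propagation for d3:
   <S T δ_x, δ_z> = Σ_{y in a d1-ball around x} <T δ_x, δ_y> <S δ_y, δ_z>. *)
Lemma fp_comp {X Y Z : Type} (d1 : X -> Y -> R) (d2 : Y -> Z -> R) (d3 : X -> Z -> R)
  (S : Op Y Z) (T : Op X Y) :
  (forall x L, exists l : list Y, NoDup l /\ forall y, d1 x y < L -> In y l) ->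
  (forall x y z, d3 x z <= d1 x y + d2 y z) ->
  finite_prop d2 S -> finite_prop d1 T -> finite_prop d3 (compOp S T).
Proof.
  intros Hball Hd3 [L2 HS] [L1 HT]. exists (L1 + L2). intros x z Hxz. simpl.
  destruct (Hball x L1) as [l [Hl Hin]].
  rewrite (op_finsupp S (app T (delta x)) l Hl).
  - apply fold_cadd_zero. intros y _.
    destruct (Rlt_dec (d1 x y) L1) as [h|h].
    + rewrite HS; [cpx_ring|]. specialize (Hd3 x y z). lra.
    + rewrite HT by lra. cpx_ring.
  - intros y Hy. apply HT. destruct (Rlt_dec (d1 x y) L1) as [h|h]; [exfalso; auto|lra].
Qed.

Lemma dcomp_le (X Y Z : CDMS) (d1 : X -> Y -> R) (d2 : Y -> Z -> R) :
  (forall x y, 0 <= d1 x y) -> (forall y z, 0 <= d2 y z) ->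
  forall x y z, dcomp X Y Z d1 d2 x z <= d1 x y + d2 y z.
Proof.
  intros H1 H2 x y z. apply (inf_family_le (fun y => d1 x y + d2 y z) 0 y).
  intros y'. specialize (H1 x y'). specialize (H2 y' z). lra.
Qed.

Lemma lincomb_Mspace {X Y Z : Type} (M : Op X Y -> Prop) (N : Op Y Z -> Prop)
  (d3 : X -> Z -> R) (l : list (cpx * Op X Y * Op Y Z)) :
  (forall T S, M T -> N S -> Mspace d3 (compOp S T)) ->
  Forall (fun p => M (snd (fst p)) /\ N (snd p)) l ->
  exists O : Op X Z, Mspace d3 O /\ forall v z, app O v z = lincomb l v z.
Proof.
  intros Hc Hl. induction Hl as [|p l [HM HN] Hl [O [HO E]]].
  - exists zeroOp. split; [apply Mspace_zero|]. intros; reflexivity.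
  - exists (addOp (scalOp (fst (fst p)) (compOp (snd p) (snd (fst p)))) O). split.
    + apply Mspace_add; auto. apply Mspace_scal; auto.
    + intros v z. simpl. rewrite E. reflexivity.
Qed.

(* M_{d3} is closed, so it contains the closed span M ⊗^ N of the products. *)
Lemma tensor_sub {X Y Z : Type} (M : Op X Y -> Prop) (N : Op Y Z -> Prop)
  (d3 : X -> Z -> R) (T : Op X Z) :
  (forall T S, M T -> N S -> Mspace d3 (compOp S T)) ->
  tensor M N T -> Mspace d3 T.
Proof.
  intros Hc HT. apply Mspace_closed. intros eps He.
  destruct (HT eps He) as [l [Hl B]].
  destruct (lincomb_Mspace M N d3 l Hc Hl) as [O [HO E]].
  exists O. split; auto. eapply opbound_ext; [|exact B]. intros; simpl. rewrite E; reflexivity.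
Qed.

Lemma tensor_sub_Mspace_dcomp (X Y Z : CDMS) (d1 : X -> Y -> R) (d2 : Y -> Z -> R)
  (T : Op X Z) :
  (forall x y, 0 <= d1 x y) -> (forall y z, 0 <= d2 y z) ->
  (forall x L, exists l : list Y, NoDup l /\ forall y, d1 x y < L -> In y l) ->
  tensor (Mspace d1) (Mspace d2) T -> Mspace (dcomp X Y Z d1 d2) T.
Proof.
  intros H1 H2 Hball. apply tensor_sub. intros T0 S0 HT0 HS0.
  apply (Mspace_comp d1 d2); auto.
  intros S' T' FS FT. apply (fp_comp d1 d2); auto. apply dcomp_le; auto.
Qed.

Section PartialInjection.
Context {A B : Type} (G : B -> option A).
Hypothesis G_inj : forall b b' a, G b = Some a -> G b' = Some a -> b = b'.

Definition pinj_app (v : A -> cpx) (b : B) : cpx :=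
  match G b with Some a => v a | None => c0 end.

Definition pinj_image (b : B) : list A := match G b with Some a => [a] | None => [] end.

(* A finite partial sum of |v ∘ G|² is a finite partial sum of |v|² over
   distinct points, so v |-> v ∘ G has norm <= 1. *)
Lemma pinj_sumsq (v : A -> cpx) (l : list B) : NoDup l ->
  sumsq (pinj_app v) l = sumsq v (flat_map pinj_image l) /\ NoDup (flat_map pinj_image l) /\
  (forall a, In a (flat_map pinj_image l) -> exists b, In b l /\ G b = Some a).
Proof.
  induction 1 as [|b l Hb Hl [E [N I]]]; simpl.
  - repeat split; auto. constructor. intros a [].
  - unfold pinj_image, pinj_app in *. destruct (G b) as [a|] eqn:Eb; simpl.
    + repeat split.
      * rewrite E. reflexivity.
      * constructor; auto. intros Ha. destruct (I a Ha) as [b' [Hb' Eb']].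
        assert (b = b') by (eapply G_inj; eauto). subst; contradiction.
      * intros a' [<-|Ha']; [exists b; auto|].
        destruct (I a' Ha') as [b' [? ?]]; exists b'; auto.
    + repeat split; auto.
      * rewrite E, cnorm2_c0. ring.
      * intros a' Ha'. destruct (I a' Ha') as [b' [? ?]]; exists b'; auto.
Qed.

Lemma pinj_add : forall u v, l2 u -> l2 v -> forall b,
  pinj_app (fun x => cadd (u x) (v x)) b = cadd (pinj_app u b) (pinj_app v b).
Proof. intros. unfold pinj_app. destruct (G b); [reflexivity|cpx_ring]. Qed.

Lemma pinj_scal : forall a u, l2 u -> forall b,
  pinj_app (fun x => cmul a (u x)) b = cmul a (pinj_app u b).
Proof. intros. unfold pinj_app. destruct (G b); [reflexivity|cpx_ring]. Qed.

Lemma pinj_bdd : exists c, 0 <= c /\ opbound pinj_app c.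
Proof.
  exists 1. split; [lra|]. intros v r Hr Hv l Hl. rewrite Rmult_1_l.
  destruct (pinj_sumsq v l Hl) as [E [N _]]. rewrite E. apply Hv; auto.
Qed.

Definition pinjOp : Op A B :=
  {| app := pinj_app; op_add := pinj_add; op_scal := pinj_scal; op_bdd := pinj_bdd |}.

End PartialInjection.

(** * Colouring the fibres of a map with boundedly many colours *)

(* Enumerating X by an injection e into nat, a point x gets as colour the
   number of points of its fibre that come before it.  Fibres of f have
   diameter <= D, so by bounded geometry the colours are bounded, and two
   points of the same fibre have different colours. *)
Section Colouring.
Variables (X : CDMS) (Y : Type) (f : X -> Y) (D : R) (e : X -> nat).
Hypothesis e_inj : forall x y, e x = e y -> x = y.
Hypothesis BGX : bounded_geometry X.
Hypothesis fibre_bounded : forall x x', f x = f x' -> dist X x x' <= D.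

Definition precedes_in_fibre (x x' : X) : Prop := f x' = f x /\ (e x' < e x)%nat.

Lemma predecessors_exist x :
  exists l : list X, NoDup l /\ forall x', In x' l <-> precedes_in_fibre x x'.
Proof.
  destruct (ball_list X BGX x D) as [l [Hl Hin]].
  exists (filter (fun x' => if excluded_middle_informative (precedes_in_fibre x x')
                            then true else false) l).
  split; [apply NoDup_filter; auto|].
  intros x'. rewrite filter_In.
  destruct (excluded_middle_informative (precedes_in_fibre x x')) as [h|h].
  - split; [auto|]. intros _. split; auto. apply Hin, fibre_bounded. destruct h; auto.
  - split; [intros [_ H]; discriminate|contradiction].
Qed.

Definition predecessors (x : X) : list X :=
  epsilon (inhabits nil) (fun l => NoDup l /\ forall x', In x' l <-> precedes_in_fibre x x').

Lemma predecessors_spec x :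
  NoDup (predecessors x) /\ forall x', In x' (predecessors x) <-> precedes_in_fibre x x'.
Proof. unfold predecessors. apply epsilon_spec, predecessors_exist. Qed.

Definition colour (x : X) : nat := length (predecessors x).

(* Later points of a fibre get larger colours: the predecessors of x, with x,
   are predecessors of x'. *)
Lemma colour_lt x x' : f x = f x' -> (e x < e x')%nat -> (colour x < colour x')%nat.
Proof.
  intros Hf He. unfold colour.
  destruct (predecessors_spec x) as [N1 I1]. destruct (predecessors_spec x') as [N2 I2].
  change (length (x :: predecessors x) <= length (predecessors x'))%nat.
  apply NoDup_incl_length.
  - constructor; auto. intros H. apply I1 in H. destruct H; lia.
  - intros y [<-|H].
    + apply I2. split; auto.
    + apply I1 in H. apply I2. destruct H as [H1 H2]. split; [congruence|lia].
Qed.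

Lemma colour_inj x x' : f x = f x' -> colour x = colour x' -> x = x'.
Proof.
  intros Hf Hc. destruct (Nat.lt_total (e x) (e x')) as [h|[h|h]].
  - pose proof (colour_lt x x' Hf h). lia.
  - apply e_inj; auto.
  - pose proof (colour_lt x' x (eq_sym Hf) h). lia.
Qed.

Definition num_colours : nat := S (proj1_sig (constructive_indefinite_description _ (BGX D))).

(* The predecessors of x lie in the ball of radius D around x, whose size is
   uniformly bounded. *)
Lemma colour_bound x : (colour x < num_colours)%nat.
Proof.
  unfold num_colours. destruct (constructive_indefinite_description _ (BGX D)) as [N HN].
  simpl. destruct (predecessors_spec x) as [N1 I1]. apply le_n_S, (HN x); auto.
  intros y Hy. apply I1 in Hy. destruct Hy as [Hy _]. apply fibre_bounded; auto.
Qed.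

Definition colour_lift (i : nat) (y : Y) : option X :=
  match excluded_middle_informative (exists x, colour x = i /\ f x = y) with
  | left H => Some (proj1_sig (constructive_indefinite_description _ H))
  | right _ => None
  end.

Definition colour_restrict (i : nat) (x : X) : option Y :=
  if Nat.eq_dec (colour x) i then Some (f x) else None.

Lemma colour_lift_some i y x : colour_lift i y = Some x -> colour x = i /\ f x = y.
Proof.
  unfold colour_lift. destruct (excluded_middle_informative _) as [H|H]; [|discriminate].
  destruct (constructive_indefinite_description _ H) as [x' Hx']. simpl.
  intros E; inversion E; subst; auto.
Qed.

Lemma colour_lift_f i x : colour x = i -> colour_lift i (f x) = Some x.
Proof.
  intros Hc. unfold colour_lift.
  destruct (excluded_middle_informative _) as [H|H]; [|exfalso; apply H; eauto].
  destruct (constructive_indefinite_description _ H) as [x' [H1 H2]]. simpl.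
  f_equal. apply colour_inj; congruence.
Qed.

Lemma colour_lift_inj i : forall y y' x,
  colour_lift i y = Some x -> colour_lift i y' = Some x -> y = y'.
Proof.
  intros y y' x H1 H2. apply colour_lift_some in H1. apply colour_lift_some in H2.
  destruct H1, H2. congruence.
Qed.

Lemma colour_restrict_inj i : forall x x' y,
  colour_restrict i x = Some y -> colour_restrict i x' = Some y -> x = x'.
Proof.
  intros x x' y. unfold colour_restrict.
  destruct (Nat.eq_dec (colour x) i), (Nat.eq_dec (colour x') i); try discriminate.
  intros H1 H2. inversion H1; inversion H2. apply colour_inj; congruence.
Qed.

Definition Vop (i : nat) : Op X Y := pinjOp (colour_lift i) (colour_lift_inj i).
Definition Uop (i : nat) : Op Y X := pinjOp (colour_restrict i) (colour_restrict_inj i).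

Lemma UV_projection i v x :
  app (Uop i) (app (Vop i) v) x = if Nat.eq_dec (colour x) i then v x else c0.
Proof.
  simpl. unfold pinj_app, colour_restrict.
  destruct (Nat.eq_dec (colour x) i); [rewrite colour_lift_f; auto|reflexivity].
Qed.

Lemma colour_partition (v : X -> cpx) x :
  lsum (seq 0 num_colours) (fun i x => if Nat.eq_dec (colour x) i then v x else c0) x = v x.
Proof.
  set (h := fun i x => if Nat.eq_dec (colour x) i then v x else c0).
  assert (Hz : forall n m, (colour x < m)%nat -> lsum (seq m n) h x = c0).
  { induction n; intros m Hm; [reflexivity|]. unfold lsum in *; simpl.
    rewrite IHn by lia. unfold h. destruct (Nat.eq_dec (colour x) m); [lia|cpx_ring]. }
  assert (H : forall n m, (m <= colour x < m + n)%nat -> lsum (seq m n) h x = v x).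
  { induction n; intros m Hm; [lia|]. unfold lsum in *; simpl. unfold h at 1.
    destruct (Nat.eq_dec (colour x) m) as [E|E].
    - rewrite Hz by lia. cpx_ring.
    - rewrite IHn by lia. cpx_ring. }
  apply H. pose proof (colour_bound x). lia.
Qed.

Section Decomposition.
Variables (Z : Type) (d1 : X -> Y -> R) (d2 : Y -> Z -> R) (K : R).
Hypothesis near_graph : forall x, d1 x (f x) <= K.

(* V_i δ_x = δ_{f x}, and d1(x, f x) <= K. *)
Lemma fp_V i : finite_prop d1 (Vop i).
Proof.
  exists (K + 1). intros x y Hxy. simpl. unfold pinj_app.
  destruct (colour_lift i y) as [x'|] eqn:E; [|reflexivity].
  apply colour_lift_some in E. destruct E as [_ <-]. apply delta_ne. intros <-.
  pose proof (near_graph x). lra.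
Qed.

(* T U_i sends δ_y to T δ_x for the point x of colour i above y (or to 0). *)
Lemma fp_TU (T : Op X Z) i :
  finite_prop (fun x z => d2 (f x) z) T -> finite_prop d2 (compOp T (Uop i)).
Proof.
  intros [L HL]. exists L. intros y z Hyz. simpl.
  destruct (colour_lift i y) as [x0|] eqn:E.
  - apply colour_lift_some in E as [H1 <-].
    rewrite (op_ext T _ (delta x0)); [apply HL; auto|].
    intros x. unfold pinj_app, colour_restrict.
    destruct (Nat.eq_dec (colour x) i) as [h|h].
    + destruct (classic (x0 = x)) as [<-|ne]; [rewrite !delta_eq; reflexivity|].
      rewrite !delta_ne; auto. intros E. apply ne, colour_inj; congruence.
    + rewrite delta_ne; auto. congruence.
  - rewrite (op_ext T _ (fun _ => c0)); [apply op_zero|].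
    intros x. unfold pinj_app, colour_restrict.
    destruct (Nat.eq_dec (colour x) i) as [h|h]; [|reflexivity].
    apply delta_ne. intros ->. rewrite colour_lift_f in E by auto. discriminate.
Qed.

Definition colour_decomposition (T : Op X Z) : list (cpx * Op X Y * Op Y Z) :=
  map (fun i => (c1, Vop i, compOp T (Uop i))) (seq 0 num_colours).

Lemma colour_decomposition_spec (T : Op X Z) : finite_prop (fun x z => d2 (f x) z) T ->
  Forall (fun p => finite_prop d1 (snd (fst p)) /\ finite_prop d2 (snd p))
         (colour_decomposition T) /\
  forall v, l2 v -> forall z, lincomb (colour_decomposition T) v z = app T v z.
Proof.
  intros HT. split.
  - apply Forall_forall. intros p Hp. apply in_map_iff in Hp.
    destruct Hp as [i [<- _]]. split; [apply fp_V|apply fp_TU; auto].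
  - intros v Hv z.
    set (h := fun i x => if Nat.eq_dec (colour x) i then v x else c0).
    assert (Hh : forall i, In i (seq 0 num_colours) -> l2 (h i)).
    { intros i _. apply (l2_dom _ v); auto. intros x. unfold h.
      destruct (Nat.eq_dec (colour x) i); [lra|rewrite cnorm2_c0; apply cnorm2_nonneg]. }
    rewrite (op_ext T v (lsum (seq 0 num_colours) h))
      by (intros x; symmetry; apply colour_partition).
    rewrite op_lsum by auto. unfold colour_decomposition. clear Hh.
    induction (seq 0 num_colours) as [|i l IH]; simpl; [reflexivity|].
    rewrite IH, (op_ext T _ (h i)) by (intros x; apply UV_projection). f_equal. cpx_ring.
Qed.

End Decomposition.
End Colouring.

(** * Inclusion of M_{d2 ∘ (f × id)} in M_{d1} ⊗^ M_{d2} *)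

Lemma Mspace_pullback_sub_tensor (X : CDMS) {Y Z : Type} (f : X -> Y) (D K : R)
  (d1 : X -> Y -> R) (d2 : Y -> Z -> R) (T : Op X Z) :
  bounded_geometry X -> (forall x x', f x = f x' -> dist X x x' <= D) ->
  (forall x, d1 x (f x) <= K) ->
  Mspace (fun x z => d2 (f x) z) T -> tensor (Mspace d1) (Mspace d2) T.
Proof.
  intros BGX fibre near HT eps He. destruct (HT eps He) as [S [FS B]].
  destruct (countable X) as [e e_inj].
  destruct (colour_decomposition_spec X Y f D e e_inj BGX fibre Z d1 d2 K near S FS)
    as [F E].
  eexists. split.
  - eapply Forall_impl; [|exact F]. intros p [H1 H2]. split; apply Mspace_of_fp; auto.
  - eapply opbound_ext; [|exact B]. intros v r Hr Hv z. rewrite E; auto. exists r; auto.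
Qed.

Lemma almost_isometry_fibre (X Y : CDMS) (f : X -> Y) (C : R) :
  almost_isometry X Y f C -> forall x x', f x = f x' -> dist X x x' <= C.
Proof. intros [_ H] x x' E. destruct (H x x') as [H1 _]. rewrite E, dist_refl in H1. lra. Qed.

Lemma almost_isometry_id (X : CDMS) (C : R) : 0 < C -> almost_isometry X X (fun x => x) C.
Proof. intros HC. split; auto. intros x x'. lra. Qed.

Lemma coarse_graph_bounded (X Y : CDMS) (f : X -> Y) (d : X -> Y -> R) :
  coarse_eq d (graph_dist X Y f) -> exists K, forall x, d x (f x) <= K.
Proof.
  intros [K HK]. exists K. intros x. destruct (HK x (f x)) as [H _].
  unfold graph_dist in H. rewrite dist_refl in H. lra.
Qed.

Theorem theorem3p3 :
  forall (X Y Z : CDMS),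
    bounded_geometry X -> bounded_geometry Y -> bounded_geometry Z ->
  forall (f : X -> Y) (g : Y -> Z) (Cf Cg Cgf : R),
    almost_isometry X Y f Cf ->
    almost_isometry Y Z g Cg ->
    almost_isometry X Z (fun x => g (f x)) Cgf ->
    is_metric_ext X Y (d_f X Y f Cf) /\
    is_metric_ext Y Z (d_f Y Z g Cg) /\
    same_ops (Mspace (d_f X Z (fun x => g (f x)) Cgf))
             (tensor (Mspace (d_f X Y f Cf)) (Mspace (d_f Y Z g Cg))) /\
    same_ops (tensor (Mspace (d_f X Y f Cf)) (Mspace (d_f Y Z g Cg)))
             (Mspace (dcomp X Y Z (d_f X Y f Cf) (d_f Y Z g Cg))) /\
    (forall C, 0 < C -> same_ops (Mspace (d_f X X (fun x => x) C)) (Cu X)).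
Proof.
  intros X Y Z BGX BGY _ f g Cf Cg Cgf Af Ag Agf.
  set (df := d_f X Y f Cf). set (dg := d_f Y Z g Cg). set (dc := dcomp X Y Z df dg).
  pose proof (d_f_metric X Y f Cf (proj1 Af) Af) as Mf.
  pose proof (d_f_metric Y Z g Cg (proj1 Ag) Ag) as Mg.
  assert (df_nn : forall x y, 0 <= df x y) by (intros; left; apply Mf).
  assert (dg_nn : forall y z, 0 <= dg y z) by (intros; left; apply Mg).
  pose proof (d_f_coarse X Y f Cf Af) as cf. pose proof (d_f_coarse Y Z g Cg Ag) as cg.
  assert (cc : coarse_eq dc (graph_dist X Z (fun x => g (f x)))).
  { apply (dcomp_coarse X Y Z df dg f g Cg); auto. intros y y'. apply Ag. }
  assert (Htensor : same_ops (tensor (Mspace df) (Mspace dg)) (Mspace dc)).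
  { intros T. split.
    - apply tensor_sub_Mspace_dcomp; auto. apply (coarse_balls_finite X Y f); auto.
    - intros HT. destruct (coarse_graph_bounded X Y f df cf) as [K HK].
      assert (cp : coarse_eq dc (fun x z => dg (f x) z)).
      { apply (coarse_eq_trans _ _ _ cc), coarse_eq_sym, (coarse_eq_pullback f _ _ cg). }
      apply (Mspace_pullback_sub_tensor X f Cf K df dg T BGX
               (almost_isometry_fibre X Y f Cf Af) HK).
      apply (Mspace_coarse_eq _ _ cp T), HT. }
  split; [exact Mf|split; [exact Mg|split; [|split; [exact Htensor|]]]].
  - assert (cgf : coarse_eq (d_f X Z (fun x => g (f x)) Cgf) dc).
    { apply (coarse_eq_trans _ _ _ (d_f_coarse X Z _ Cgf Agf)), coarse_eq_sym, cc. }
    intros T. rewrite (Mspace_coarse_eq _ _ cgf T). symmetry. apply Htensor.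
  - intros C HC. apply Mspace_coarse_eq, (d_f_coarse X X (fun x => x) C), almost_isometry_id, HC.
Qed.
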